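(* Let $L$ be a complete enriched graded Lie algebra such that $\dim(L/L^{(2)})_p<\infty$ for every $p$. Then (i) for every $p$ and every integer $k$ there is an index $\alpha$ such that the projection $(L/L^{(k)})_p\to(L_\alpha/L_\alpha^k)_p$ is an isomorphism; (ii) $L^k=L^{(k)}$ for all $k\ge1$, and so $L$ is pronilpotent.
   Context: A complete enriched Lie algebra is a graded Lie algebra $L=L_{\ge0}$ over $\mathbb Q$ with a directed family (under inclusion of kernels) of surjective morphisms $\rho_\alpha:L\to L_\alpha$ onto finite-dimensional nilpotent Lie algebras, $\bigcap\ker\rho_\alpha=0$, and $L\cong\varprojlim_\alpha L_\alpha$. $L^k$ is the span of iterated brackets of length $k$ (lower central series), and $L^{(k)}$ is the closure of $L^k$, i.e. $\varprojlim_\alpha\rho_\alpha(L^k)$. $L$ is pronilpotent if $L\to\varprojlim_nL/L^n$ is an isomorphism. *)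

From HB Require Import structures.
From mathcomp Require Import all_boot all_order all_algebra.
Set Implicit Arguments. Unset Strict Implicit. Unset Printing Implicit Defensive.
Import Order.TTheory GRing.Theory Num.Theory.
Local Open Scope ring_scope.

(* The carrier is a
   Q-vector space; [gla_deg p] is the subspace L_p of homogeneous elements
   of degree p; L is the (internal) direct sum of the L_p. *)
Record GLie := {
  gla_carrier :> lmodType rat;
  gla_br : gla_carrier -> gla_carrier -> gla_carrier;
  gla_deg : nat -> gla_carrier -> Prop;
  gla_brDl : forall (c : rat) x y z, gla_br (c *: x + y) z = c *: gla_br x z + gla_br y z;
  gla_brDr : forall (c : rat) x y z, gla_br x (c *: y + z) = c *: gla_br x y + gla_br x z;
  gla_deg0 : forall p, gla_deg p 0;
  gla_degD : forall p (c : rat) x y, gla_deg p x -> gla_deg p y -> gla_deg p (c *: x + y);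
  gla_decomp : forall x, exists (N : nat) (f : nat -> gla_carrier),
      (forall p, gla_deg p (f p)) /\ x = \sum_(p < N) f p;
  gla_direct : forall (N : nat) (f : nat -> gla_carrier),
      (forall p, gla_deg p (f p)) -> \sum_(p < N) f p = 0 -> forall p, (p < N)%N -> f p = 0;
  gla_br_deg : forall p q x y, gla_deg p x -> gla_deg q y -> gla_deg (p + q) (gla_br x y);
  gla_antisym : forall p q x y, gla_deg p x -> gla_deg q y ->
      gla_br x y = - (((-1) ^+ (p * q) : rat) *: gla_br y x);
  gla_jacobi : forall p q x y z, gla_deg p x -> gla_deg q y ->
      gla_br x (gla_br y z) = gla_br (gla_br x y) z
                              + ((-1) ^+ (p * q) : rat) *: gla_br y (gla_br x z)
}.

Fixpoint lcs (L : GLie) (k : nat) : L -> Prop :=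
  match k with
  | 0 => fun _ => True
  | k'.+1 =>
      if k' is 0 then fun _ => True
      else fun x => exists (n : nat) (xs ys : 'I_n -> L),
          (forall i, @lcs L k' (ys i)) /\ x = \sum_(i < n) gla_br (xs i) (ys i)
  end.

Definition GLie_morph (L M : GLie) (f : L -> M) : Prop :=
  (forall (c : rat) x y, f (c *: x + y) = c *: f x + f y) /\
  (forall p x, gla_deg p x -> gla_deg p (f x)) /\
  (forall x y, f (gla_br x y) = gla_br (f x) (f y)).

(* finite-dimensional (total dimension) *)
Definition GLie_findim (M : GLie) : Prop :=
  exists (n : nat) (v : 'I_n -> M), forall x, exists c : 'I_n -> rat,
      x = \sum_(i < n) c i *: v i.

Definition GLie_nilpotent (M : GLie) : Prop :=
  exists n, forall x : M, lcs n x -> x = 0.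

Definition complete_enriched (L : GLie) (A : Type) (La : A -> GLie)
    (rho : forall a, L -> La a) : Prop :=
  inhabited A /\
      (forall a, GLie_morph (rho a) /\ forall y : La a, exists x, rho a x = y) /\
      (forall a, GLie_findim (La a) /\ GLie_nilpotent (La a)) /\
      (forall a b, exists g, forall x, rho g x = 0 -> rho a x = 0 /\ rho b x = 0) /\
      (forall x, (forall a, rho a x = 0) -> x = 0) /\
      (* L -> lim_a L_a is surjective (degreewise inverse limit along the
         maps L_g -> L_a induced when ker rho_g is contained in ker rho_a) *)
      (forall p (xa : forall a, La a),
          (forall a, gla_deg p (xa a)) ->
          (forall a g, (forall y, rho g y = 0 -> rho a y = 0) ->
                 forall y, rho g y = xa g -> rho a y = xa a) ->
          exists x, gla_deg p x /\ forall a, rho a x = xa a).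

(* L^{(k)} = closure of L^k = lim_a rho_a(L^k), seen inside L = lim_a L_a *)
Definition lcs_closure (L : GLie) (A : Type) (La : A -> GLie)
    (rho : forall a, L -> La a) (k : nat) (x : L) : Prop :=
  forall a, exists y : L, lcs k y /\ rho a y = rho a x.

(* dim (L / P)_p < oo, for a graded subspace P: finitely many degree-p
   elements span L_p modulo P. *)
Definition findim_quot_deg (L : GLie) (P : L -> Prop) (p : nat) : Prop :=
  exists (n : nat) (v : 'I_n -> L), (forall i, gla_deg p (v i)) /\
    forall x, gla_deg p x -> exists c : 'I_n -> rat, P (x - \sum_(i < n) c i *: v i).

(* L -> lim_n L/L^n is an isomorphism (degreewise inverse limit) *)
Definition pronilpotent (L : GLie) : Prop :=
  (forall x : L, (forall n, lcs n x) -> x = 0) /\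
  (forall p (xs : nat -> L), (forall n, gla_deg p (xs n)) ->
     (forall n, lcs n (xs n.+1 - xs n)) ->
     exists x, gla_deg p x /\ forall n, lcs n (x - xs n)).

(* Write L^(k) for the closure of L^k: the elements whose image lies in L_a^k for all a.
   Choose in each degree r finitely many v_(r,i) spanning L_r modulo L^(2). Since
   [L^(2), L^j] lies in L^(j+2) by Jacobi, every degree-p element of L^(m+2) is congruent
   modulo L^(m+3) to a sum of brackets [v_(r,i), z_(r,i)] with z_(r,i) in L^(m+1) of degree
   p - r. By induction on k, finitely many degree-p elements span L_p modulo L^(k); on their
   span the directed family of kernels of L_p -> (L_a/L_a^k)_p stabilises, which gives the
   index a of (i). Iterating the congruence and passing to the limit (completeness) writes
   every degree-p element of L^(k+2) as a sum of brackets [v_(r,i), z_(r,i)] with z_(r,i) in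
   L^(k+1) = L^{k+1} (induction on k); hence L^(k) = L^k, and pronilpotence follows. *)

From mathcomp Require Import all_boot all_order all_algebra.
From Stdlib Require Import Classical IndefiniteDescription.
Set Implicit Arguments. Unset Strict Implicit. Unset Printing Implicit Defensive.
Import GRing.Theory.
Local Open Scope ring_scope.

Section Linear.
Variables (U V : lmodType rat) (f : U -> V).
Hypothesis f_lin : linear f.

Lemma lin0 : f 0 = 0.
Proof. by apply: (addIr (f 0)); rewrite add0r -{1}(scale1r (f 0)) -f_lin scale1r addr0. Qed.

Lemma linD x y : f (x + y) = f x + f y.
Proof. by rewrite -{1}(scale1r x) f_lin scale1r. Qed.

Lemma linZ c x : f (c *: x) = c *: f x.
Proof. by rewrite -[c *: x]addr0 f_lin lin0 addr0. Qed.

Lemma linB x y : f (x - y) = f x - f y.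
Proof. by rewrite addrC -scaleN1r f_lin scaleN1r addrC. Qed.

Lemma lin_sum (I : Type) (r : seq I) (P : pred I) (F : I -> U) :
  f (\sum_(i <- r | P i) F i) = \sum_(i <- r | P i) f (F i).
Proof. exact: (big_morph f linD lin0). Qed.

End Linear.

Definition subspace (V : lmodType rat) (P : V -> Prop) :=
  P 0 /\ forall (c : rat) x y, P x -> P y -> P (c *: x + y).

Section Subspace.
Variables (V : lmodType rat) (P : V -> Prop).
Hypothesis P_sub : subspace P.

Lemma subspace0 : P 0. Proof. by case: P_sub. Qed.

Lemma subspaceD x y : P x -> P y -> P (x + y).
Proof. by move=> Px Py; rewrite -[x]scale1r; apply: P_sub.2. Qed.

Lemma subspaceZ c x : P x -> P (c *: x).
Proof. by move=> Px; rewrite -[_ *: x]addr0; apply: P_sub.2 Px subspace0. Qed.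

Lemma subspaceB x y : P x -> P y -> P (x - y).
Proof. by move=> Px Py; rewrite -scaleN1r addrC; apply: P_sub.2. Qed.

Lemma subspace_sum (I : Type) (r : seq I) (Q : pred I) (F : I -> V) :
  (forall i, Q i -> P (F i)) -> P (\sum_(i <- r | Q i) F i).
Proof.
move=> PF; elim/big_rec: _ => [|i y Qi Py]; first exact: subspace0.
exact: subspaceD (PF i Qi) Py.
Qed.

End Subspace.

Lemma subspace_preim (U V : lmodType rat) (f : U -> V) (P : V -> Prop) :
  linear f -> subspace P -> subspace (fun x => P (f x)).
Proof.
move=> f_lin P_sub; split; first by rewrite lin0 //; exact: subspace0.
by move=> c x y Px Py; rewrite f_lin; apply: P_sub.2.
Qed.

Section Span.
Variable V : lmodType rat.

Definition lspan (s : seq V) (x : V) : Prop :=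
  exists c : nat -> rat, x = \sum_(i < size s) c i *: s`_i.

Lemma lspan_nil x : lspan [::] x <-> x = 0.
Proof.
split=> [[c ->]|->]; first by rewrite big_ord0.
by exists (fun=> 0); rewrite big_ord0.
Qed.

Lemma lspan_cons v s x : lspan (v :: s) x <-> exists k y, lspan s y /\ x = k *: v + y.
Proof.
split=> [[c ->]|[k [y [[c ->] ->]]]].
  rewrite big_ord_recl; exists (c 0%N), (\sum_(i < size s) c i.+1 *: s`_i).
  by split; [exists (fun i => c i.+1) | congr (_ + _); apply: eq_bigr => i _; rewrite lift0].
exists (fun i => if i is i'.+1 then c i' else k).
by rewrite big_ord_recl; congr (_ + _); apply: eq_bigr => i _; rewrite lift0.
Qed.

Lemma lspan0 s : lspan s 0.
Proof. by exists (fun=> 0); rewrite big1 // => i _; rewrite scale0r. Qed.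

Lemma lspan_subspace s : subspace (lspan s).
Proof.
split; first exact: lspan0.
elim: s => [|v s IHs] c x y.
  by move=> /lspan_nil -> /lspan_nil ->; apply/lspan_nil; rewrite scaler0 addr0.
move=> /lspan_cons [k [x' [sx' ->]]] /lspan_cons [k' [y' [sy' ->]]].
apply/lspan_cons; exists (c * k + k'), (c *: x' + y'); split; first exact: IHs.
by rewrite scalerDr scalerA scalerDl addrACA.
Qed.

Lemma lspan_min (P : V -> Prop) s x :
  subspace P -> {in s, forall y, P y} -> lspan s x -> P x.
Proof.
move=> P_sub; elim: s x => [|v s IHs] x sP; first by move/lspan_nil ->; exact: subspace0.
move/lspan_cons => [k [y [sy ->]]]; apply: P_sub.2; first by apply: sP; rewrite inE eqxx.
by apply: IHs => // z sz; apply: sP; rewrite inE sz orbT.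
Qed.

Lemma lspan_cat s t y z : lspan s y -> lspan t z -> lspan (s ++ t) (y + z).
Proof.
elim: s y => [|v s IHs] y; first by move/lspan_nil ->; rewrite add0r.
move/lspan_cons => [k [y' [sy' ->]]] tz; apply/lspan_cons.
by exists k, (y' + z); split; [exact: IHs | rewrite addrA].
Qed.

Lemma lspan_map (I : Type) (r : seq I) (f : I -> V) (k : I -> rat) :
  lspan (map f r) (\sum_(i <- r) k i *: f i).
Proof.
elim: r => [|i r IHr]; first by rewrite big_nil; exact: lspan0.
by rewrite big_cons; apply/lspan_cons; exists (k i), (\sum_(j <- r) k j *: f j).
Qed.

Lemma lspan_flatten (I : Type) (r : seq I) (f : I -> seq V) (y : I -> V) :
  (forall i, lspan (f i) (y i)) -> lspan (flatten (map f r)) (\sum_(i <- r) y i).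
Proof.
move=> fy; elim: r => [|i r IHr]; first by rewrite big_nil; exact: lspan0.
by rewrite big_cons; apply: lspan_cat.
Qed.

Definition lcomb (s : seq V) (r : 'rV[rat]_(size s)) : V :=
  \sum_(i < size s) r 0 i *: s`_i.

Lemma lcomb_linear s : linear (@lcomb s).
Proof.
move=> c x y; rewrite /lcomb scaler_sumr -big_split; apply: eq_bigr => i _.
by rewrite !mxE scalerDl scalerA.
Qed.

Lemma lspan_lcomb s x : lspan s x <-> exists r, x = @lcomb s r.
Proof.
split=> [[c ->]|[r ->]].
  by exists (\row_(i < size s) c i); apply: eq_bigr => i _; rewrite mxE.
exists (fun i => if insub i is Some j then r 0 j else 0).
by apply: eq_bigr => i _; rewrite valK.
Qed.

End Span.

Lemma lspan_linear (U V : lmodType rat) (f : U -> V) s y :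
  linear f -> lspan s y -> lspan (map f s) (f y).
Proof.
move=> f_lin; elim: s y => [|v s IHs] y.
  by move/lspan_nil ->; rewrite lin0 //; exact: lspan0.
move/lspan_cons => [k [y' [sy' ->]]]; rewrite f_lin; apply/lspan_cons.
by exists k, (f y'); split => //; apply: IHs.
Qed.

Definition directed (A : Type) (V : lmodType rat) (R : A -> V -> Prop) :=
  forall a b, exists g, forall x, R g x -> R a x /\ R b x.

Lemma ex_minimal_nat (S : nat -> Prop) n :
  S n -> exists k, S k /\ forall j, S j -> (k <= j)%N.
Proof.
elim/ltn_ind: n => n IHn Sn.
have [[j [ltjn Sj]]|no_less] := classic (exists j, (j < n)%N /\ S j).
  exact: IHn j ltjn Sj.
by exists n; split => // j Sj; rewrite leqNgt; apply/negP => ltjn; apply: no_less; exists j.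
Qed.

Lemma vspan_min (W : vectType rat) (P : W -> Prop) (X : seq W) x :
  subspace P -> {in X, forall y, P y} -> x \in <<X>>%VS -> P x.
Proof.
move=> P_sub; elim: X x => [|v X IHX] x XP.
  by rewrite span_nil memv0 => /eqP ->; exact: subspace0.
rewrite span_cons => /memv_addP [y /vlineP [k ->] [z Xz ->]].
apply: P_sub.2; first by apply: XP; rewrite inE eqxx.
by apply: IHX => // t Xt; apply: XP; rewrite inE Xt orbT.
Qed.

(* Take [g] minimising the size of the largest free family inside [P g]: a free family of
   that size inside a lower bound of [P g] and [P b] already spans [P g]. *)
Lemma directed_subspaces_min (A : Type) (W : vectType rat) (P : A -> W -> Prop) :
  inhabited A -> (forall a, subspace (P a)) -> directed P ->
  exists g, forall b x, P g x -> P b x.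
Proof.
move=> [a0] P_sub P_dir.
pose has_free a k := exists2 X : seq W, size X = k /\ free X & {in X, forall y, P a y}.
have [k0 [[g no_free_g] k0_min]] : exists k, (exists a, ~ has_free a k.+1) /\
    forall j, (exists a, ~ has_free a j.+1) -> (k <= j)%N.
  apply: (@ex_minimal_nat _ (\dim (@fullv _ W))); exists a0 => -[X [sizeX freeX] _].
  by move: (dimvS (subvf <<X>>)); rewrite (eqP freeX) sizeX ltnn.
have free_k0 a : has_free a k0.
  case: k0 {no_free_g} k0_min => [|k] k0_min; first by exists [::] => //; rewrite nil_free.
  by apply: NNPP => no_free; have := k0_min k (ex_intro _ a no_free); rewrite ltnn.
exists g => b x Pgx; have [h Ph] := P_dir g b; have [X [sizeX freeX] XPh] := free_k0 h.
have [Xx|Xnx] := boolP (x \in <<X>>%VS).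
  by apply: vspan_min Xx => // y /XPh /Ph [].
case: no_free_g; exists (x :: X); first by rewrite /= sizeX free_cons Xnx freeX.
by move=> y; rewrite inE => /orP [/eqP ->|/XPh /Ph []].
Qed.

Section DirectedSubspaces.
Variables (A : Type) (V : lmodType rat) (R : A -> V -> Prop).
Hypotheses (A_inh : inhabited A) (R_sub : forall a, subspace (R a)) (R_dir : directed R).

Lemma directed_subspaces_stable s : exists g, forall b y, lspan s y -> R g y -> R b y.
Proof.
have [||g Rg] := @directed_subspaces_min A _ (fun a r => R a (@lcomb _ s r)) A_inh.
- by move=> a; apply: subspace_preim (R_sub a); exact: lcomb_linear.
- by move=> a b; have [g Rg] := R_dir a b; exists g => r; apply: Rg.
by exists g => b y /lspan_lcomb [r ->]; apply: Rg.
Qed.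

(* Stability on the span of [u :: s], which contains every [u - y]. *)
Lemma directed_subspaces_approx u s :
  (forall a, exists2 y, lspan s y & R a (u - y)) ->
  exists2 y, lspan s y & forall a, R a (u - y).
Proof.
move=> approx; have [g Rg] := directed_subspaces_stable (u :: s).
have [y sy Rgy] := approx g; exists y => // b; apply: Rg Rgy.
apply/lspan_cons; exists 1, (- y); rewrite scale1r -scaleN1r; split => //.
exact: subspaceZ (lspan_subspace s) _ _ sy.
Qed.

End DirectedSubspaces.

Definition spans_mod (V : lmodType rat) (s : seq V) (P Q : V -> Prop) :=
  forall u, P u -> exists2 y, lspan s y & Q (u - y).

Lemma spans_mod_cat (V : lmodType rat) (s s' : seq V) (P Q R : V -> Prop) :
  subspace P -> {in s, forall y, P y} -> spans_mod s P Q ->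
  spans_mod s' (fun u => P u /\ Q u) R -> spans_mod (s ++ s') P R.
Proof.
move=> P_sub sP span_s span_s' u Pu; have [y sy Quy] := span_s u Pu.
have Puy : P (u - y) by apply: subspaceB => //; exact: lspan_min sy.
have [y' s'y' Ruy'] := span_s' (u - y) (conj Puy Quy).
by exists (y + y'); [exact: lspan_cat | rewrite opprD addrA].
Qed.

Lemma dependent_choice_nat (T : Type) (P : nat -> T -> Prop) (R : nat -> T -> T -> Prop) x0 :
  P 0%N x0 -> (forall t x, P t x -> exists y, P t.+1 y /\ R t x y) ->
  exists xs : nat -> T, forall t, P t (xs t) /\ R t (xs t) (xs t.+1).
Proof.
move=> P0 step.
pose next t (x : {x | P t x}) := constructive_indefinite_description _ (step t _ (proj2_sig x)).
pose fix xs t : {x | P t x} :=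
  if t is t'.+1 then exist _ (proj1_sig (next t' (xs t'))) (proj2_sig (next t' (xs t'))).1
  else exist _ x0 P0.
exists (fun t => proj1_sig (xs t)) => t; split; first exact: proj2_sig (xs t).
exact: (proj2_sig (next t (xs t))).2.
Qed.

Section GradedLie.
Context {M : GLie}.
Local Notation br := (@gla_br M).
Local Notation deg := (@gla_deg M).

Lemma br_linearl z : linear (br^~ z). Proof. by move=> c x y; apply: gla_brDl. Qed.
Lemma br_linearr x : linear (br x). Proof. by move=> c y z; apply: gla_brDr. Qed.

Lemma br0r x : br x 0 = 0. Proof. exact: (lin0 (br_linearr x)). Qed.
Lemma brDr x y z : br x (y + z) = br x y + br x z. Proof. exact: (linD (br_linearr x)). Qed.
Lemma brBr x y z : br x (y - z) = br x y - br x z. Proof. exact: (linB (br_linearr x)). Qed.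
Lemma brZr c x z : br x (c *: z) = c *: br x z. Proof. exact: (linZ (br_linearr x)). Qed.
Lemma brZl c x z : br (c *: x) z = c *: br x z. Proof. exact: (linZ (br_linearl z)). Qed.
Lemma brBl x y z : br (x - y) z = br x z - br y z. Proof. exact: (linB (br_linearl z)). Qed.
Lemma br_suml (I : Type) (r : seq I) (P : pred I) (F : I -> M) z :
  br (\sum_(i <- r | P i) F i) z = \sum_(i <- r | P i) br (F i) z.
Proof. exact: (lin_sum (br_linearl z)). Qed.
Lemma br_sumr (I : Type) (r : seq I) (P : pred I) (F : I -> M) x :
  br x (\sum_(i <- r | P i) F i) = \sum_(i <- r | P i) br x (F i).
Proof. exact: (lin_sum (br_linearr x)). Qed.

Lemma deg_subspace p : subspace (deg p).
Proof. by split; [exact: gla_deg0 | exact: gla_degD]. Qed.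

Definition hdecomp (x : M) := constructive_indefinite_description _ (gla_decomp x).
Definition hbound (x : M) : nat := proj1_sig (hdecomp x).
Definition hcomps (x : M) : nat -> M :=
  proj1_sig (constructive_indefinite_description _ (proj2_sig (hdecomp x))).

Lemma hcompsP x : (forall p, deg p (hcomps x p)) /\ x = \sum_(p < hbound x) hcomps x p.
Proof.
by rewrite /hcomps /hbound; case: constructive_indefinite_description.
Qed.

Definition hcomp (p : nat) (x : M) : M := if (p < hbound x)%N then hcomps x p else 0.

Lemma sum_ord_pad (V : nmodType) (N K : nat) (g : nat -> V) : (N <= K)%N ->
  \sum_(r < K) (if (r < N)%N then g r else 0) = \sum_(r < N) g r.
Proof.
move=> leNK; rewrite -(subnKC leNK) big_split_ord /= [X in _ + X]big1 ?addr0.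
  by apply: eq_bigr => i _; rewrite ltn_ord.
by move=> i _; rewrite ltnNge leq_addr.
Qed.

Lemma hdecomp_uniq (N N' : nat) (f g : nat -> M) :
  (forall r, deg r (f r)) -> (forall r, deg r (g r)) ->
  \sum_(r < N) f r = \sum_(r < N') g r ->
  forall p, (if (p < N)%N then f p else 0) = (if (p < N')%N then g p else 0).
Proof.
move=> df dg eq_fg p; apply/eqP; rewrite -subr_eq0; apply/eqP.
pose h r := (if (r < N)%N then f r else 0) - (if (r < N')%N then g r else 0).
have dh r : deg r (h r).
  apply: subspaceB (deg_subspace r) _ _ _ _.
  - by case: ifP => _; [exact: df | exact: gla_deg0].
  - by case: ifP => _; [exact: dg | exact: gla_deg0].
have [ltpK|] := ltnP p (maxn N N').
  apply: (gla_direct dh _ ltpK).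
  by rewrite sumrB !sum_ord_pad ?leq_maxl ?leq_maxr // eq_fg subrr.
by rewrite geq_max /h => /andP [leNp leN'p]; rewrite !ltnNge leNp leN'p subrr.
Qed.

Lemma hcomp_sum_deg (N : nat) (g : nat -> M) : (forall r, deg r (g r)) ->
  forall p, hcomp p (\sum_(r < N) g r) = if (p < N)%N then g p else 0.
Proof.
move=> dg p; have [dx ex] := hcompsP (\sum_(r < N) g r).
exact: hdecomp_uniq dx dg (esym ex) p.
Qed.

Lemma hcomp_deg p x : deg p (hcomp p x).
Proof. rewrite /hcomp; case: ifP => _; [exact: (hcompsP x).1 | exact: gla_deg0]. Qed.

Lemma hcomp_out x r : (hbound x <= r)%N -> hcomp r x = 0.
Proof. by rewrite /hcomp ltnNge => ->. Qed.

Lemma hcomp_sum x K : (hbound x <= K)%N -> x = \sum_(r < K) hcomp r x.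
Proof. by move=> leK; rewrite sum_ord_pad // -(hcompsP x).2. Qed.

Lemma hcomp_linear p : linear (hcomp p).
Proof.
move=> c x y; pose K := maxn (hbound x) (hbound y).
have -> : c *: x + y = \sum_(r < K) (c *: hcomp r x + hcomp r y).
  by rewrite big_split /= -scaler_sumr -!hcomp_sum ?leq_maxl ?leq_maxr.
rewrite (@hcomp_sum_deg K (fun r => c *: hcomp r x + hcomp r y)); last first.
  by move=> r; apply: (deg_subspace r).2; apply: hcomp_deg.
case: ltnP => //; rewrite geq_max => /andP [lex ley].
by rewrite !hcomp_out // scaler0 addr0.
Qed.

Lemma hcomp_homog d z p : deg d z -> hcomp p z = if p == d then z else 0.
Proof.
move=> dz; pose g r := if r == d then z else 0.
have zE : z = \sum_(r < d.+1) g r.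
  by rewrite big_ord_recr /= /g eqxx big1 ?add0r // => i _; rewrite ltn_eqF.
have dg r : deg r (g r) by rewrite /g; case: eqP => [->|_] //; exact: gla_deg0.
rewrite [in LHS]zE (hcomp_sum_deg _ dg) /g.
by case: ltnP => // ltdp; rewrite gtn_eqF.
Qed.

Lemma hcomp_id d z : deg d z -> hcomp d z = z.
Proof. by move=> dz; rewrite (hcomp_homog d dz) eqxx. Qed.

End GradedLie.

Lemma morph_hcomp (M M' : GLie) (f : M -> M') : GLie_morph f ->
  forall p x, hcomp p (f x) = f (hcomp p x).
Proof.
move=> [f_lin [f_deg _]] p x.
have -> : f x = \sum_(r < hbound x) f (hcomp r x) by rewrite -(lin_sum f_lin) -hcomp_sum.
rewrite (@hcomp_sum_deg _ _ (fun r => f (hcomp r x))) => [|r]; last first.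
  by apply: f_deg; apply: hcomp_deg.
by case: ltnP => // le_x_p; rewrite hcomp_out // (lin0 f_lin).
Qed.

Definition brspan (M : GLie) (P : M -> Prop) (x : M) : Prop :=
  exists (n : nat) (xs ys : 'I_n -> M),
    (forall i, P (ys i)) /\ x = \sum_(i < n) gla_br (xs i) (ys i).

Lemma lcsSS (M : GLie) k (x : M) : lcs k.+2 x = brspan (lcs k.+1) x.
Proof. by []. Qed.

Section LowerCentralSeries.
Context {M : GLie}.
Local Notation br := (@gla_br M).

Lemma brspan_subspace (P : M -> Prop) : subspace (brspan P).
Proof.
split; first by exists 0%N, (fun=> 0), (fun=> 0); rewrite big_ord0; split => // -[].
move=> c x y [n [xs [ys [Pys ->]]]] [m [xs' [ys' [Pys' ->]]]].
exists (n + m)%N, (fun i => match split i with inl j => c *: xs j | inr j => xs' j end).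
exists (fun i => match split i with inl j => ys j | inr j => ys' j end).
split; first by move=> i; case: (split i).
rewrite big_split_ord scaler_sumr; congr (_ + _); apply: eq_bigr => i _.
  by rewrite (unsplitK (inl i) : split (lshift m i) = inl i) brZl.
by rewrite (unsplitK (inr i) : split (rshift n i) = inr i).
Qed.

Lemma brspan_br (P : M -> Prop) x y : P y -> brspan P (br x y).
Proof. by move=> Py; exists 1%N, (fun=> x), (fun=> y); rewrite big_ord1. Qed.

Lemma lcs_subspace k : subspace (@lcs M k).
Proof. by case: k => [|[|k]] //; exact: brspan_subspace. Qed.

Lemma lcsS k (x : M) : lcs k.+1 x -> lcs k x.
Proof.
elim: k x => [|[|k] IHk] x //; rewrite !lcsSS => -[n [xs [ys [lys ->]]]].
by exists n, xs, ys; split => // i; apply: IHk.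
Qed.

Lemma lcs_le k m (x : M) : (k <= m)%N -> lcs m x -> lcs k x.
Proof.
move/subnKC <-; elim: (m - k)%N => [|d IHd]; first by rewrite addn0.
by rewrite addnS => /lcsS; exact: IHd.
Qed.

Lemma lcs_br k (x y : M) : lcs k y -> lcs k.+1 (br x y).
Proof. by case: k => [|k] // ly; rewrite lcsSS; apply: brspan_br. Qed.

Lemma br_hcomp_sum (x y : M) :
  br x y = \sum_(r < hbound x) \sum_(s < hbound y) br (hcomp r x) (hcomp s y).
Proof.
rewrite {1}(hcomp_sum (leqnn (hbound x))) br_suml; apply: eq_bigr => r _.
by rewrite {1}(hcomp_sum (leqnn (hbound y))) br_sumr.
Qed.

Lemma hcomp_br_in (P : M -> Prop) p (x y : M) : subspace P ->
  (forall r s, (r + s)%N = p -> P (br (hcomp r x) (hcomp s y))) -> P (hcomp p (br x y)).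
Proof.
move=> P_sub Prs; rewrite br_hcomp_sum (lin_sum (hcomp_linear p)).
apply: subspace_sum => // r _; rewrite (lin_sum (hcomp_linear p)).
apply: subspace_sum => // s _.
rewrite (hcomp_homog p (gla_br_deg (hcomp_deg r x) (hcomp_deg s y))).
by case: eqP => [/esym/Prs|_] //; exact: subspace0.
Qed.

Lemma lcs_hcomp k p (x : M) : lcs k x -> lcs k (hcomp p x).
Proof.
elim: k p x => [|[|k] IHk] p x //; rewrite lcsSS => -[n [xs [ys [lys ->]]]].
rewrite (lin_sum (hcomp_linear p)); apply: subspace_sum => [|i _]; first exact: lcs_subspace.
apply: hcomp_br_in => [|r s _]; first exact: lcs_subspace.
by apply: lcs_br; apply: IHk.
Qed.

(* Jacobi: [[u, v], z] = [u, [v, z]] -/+ [v, [u, z]]. *)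
Lemma lcs2_br j (x z : M) : lcs 2 x -> lcs j z -> lcs j.+2 (br x z).
Proof.
move=> [n [xs [ys [_ ->]]]] lz; rewrite br_suml.
apply: subspace_sum => [|i _]; first exact: lcs_subspace.
rewrite (br_hcomp_sum (xs i)) br_suml; apply: subspace_sum => [|r _]; first exact: lcs_subspace.
rewrite br_suml; apply: subspace_sum => [|s _]; first exact: lcs_subspace.
have jacobi := gla_jacobi z (hcomp_deg r (xs i)) (hcomp_deg s (ys i)).
rewrite -[br (br _ _) z](addrK (((-1) ^+ (r * s) : rat) *:
  br (hcomp s (ys i)) (br (hcomp r (xs i)) z))) -jacobi.
apply: subspaceB; [exact: lcs_subspace | by do 2 apply: lcs_br |].
by apply: subspaceZ; [exact: lcs_subspace | do 2 apply: lcs_br].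
Qed.

End LowerCentralSeries.

Section Morphism.
Variables (M M' : GLie) (f : M -> M').
Hypothesis f_morph : GLie_morph f.

Lemma lcs_morph k (x : M) : lcs k x -> lcs k (f x).
Proof.
have [f_lin [_ f_br]] := f_morph.
elim: k x => [|[|k] IHk] x //; rewrite !lcsSS => -[n [xs [ys [lys ->]]]].
exists n, (fun i => f (xs i)), (fun i => f (ys i)); split; first by move=> i; apply: IHk.
by rewrite (lin_sum f_lin); apply: eq_bigr => i _; rewrite f_br.
Qed.

Lemma lcs_lift (f_surj : forall y : M', exists x, f x = y) k (z : M') :
  lcs k z -> exists2 y, lcs k y & f y = z.
Proof.
have [f_lin [_ f_br]] := f_morph.
elim: k z => [|[|k] IHk] z; try by move=> _; have [x <-] := f_surj z; exists x.
rewrite !lcsSS => -[n [xs [ys [lys ->]]]].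
have [X fX] := fin_all_exists (fun i => f_surj (xs i)).
have [Y lY fY] := fin_all_exists2 (fun i => IHk _ (lys i)).
exists (\sum_(i < n) gla_br (X i) (Y i)); first by exists n, X, Y.
by rewrite (lin_sum f_lin); apply: eq_bigr => i _; rewrite f_br fX fY.
Qed.

End Morphism.

Section CompleteEnriched.
Variables (L : GLie) (A : Type) (La : A -> GLie) (rho : forall a, L -> La a).
Hypothesis L_ce : complete_enriched rho.

Local Notation br := (@gla_br L).
Local Notation deg := (@gla_deg L).
Local Notation clos := (lcs_closure rho).

Lemma ce_inhabited : inhabited A. Proof. by case: L_ce. Qed.

Lemma rho_morph a : GLie_morph (rho a).
Proof. by case: L_ce => _ [/(_ a) []]. Qed.

Lemma rho_surj a : forall y : La a, exists x, rho a x = y.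
Proof. by case: L_ce => _ [/(_ a) [_]]. Qed.

Lemma La_nilpotent a : GLie_nilpotent (La a).
Proof. by case: L_ce => _ [_ [/(_ a) []]]. Qed.

Lemma rho_ker_directed a b : exists g, forall x, rho g x = 0 -> rho a x = 0 /\ rho b x = 0.
Proof. by case: L_ce => _ [_ [_ [dir _]]]; apply: dir. Qed.

Lemma rho_separating x : (forall a, rho a x = 0) -> x = 0.
Proof. by case: L_ce => _ [_ [_ [_ [sep _]]]]; apply: sep. Qed.

Lemma rho_limit p (xa : forall a, La a) :
  (forall a, gla_deg p (xa a)) ->
  (forall a g, (forall y, rho g y = 0 -> rho a y = 0) ->
     forall y, rho g y = xa g -> rho a y = xa a) ->
  exists2 x, deg p x & forall a, rho a x = xa a.
Proof.
by case: L_ce => _ [_ [_ [_ [_ lim]]]] /lim /[apply] -[x [dx rx]]; exists x.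
Qed.

Lemma rho_linear a : linear (rho a). Proof. by case: (rho_morph a). Qed.

Lemma rho_ker_eq g a y z : (forall w, rho g w = 0 -> rho a w = 0) ->
  rho g y = rho g z -> rho a y = rho a z.
Proof.
move=> ker_ga eq_yz; apply/eqP; rewrite -subr_eq0 -(linB (rho_linear a)).
by apply/eqP/ker_ga; rewrite (linB (rho_linear g)) eq_yz subrr.
Qed.

Lemma lcs_closureP k x : clos k x <-> forall a, lcs k (rho a x).
Proof.
split=> [clos_x a | lx a].
  by have [y [ly <-]] := clos_x a; exact: (lcs_morph (rho_morph a) ly).
by have [y ly] := lcs_lift (rho_morph a) (@rho_surj a) (lx a); exists y.
Qed.

Lemma lcs_closure_subspace k : subspace (clos k).
Proof.
have sub a : subspace (fun x => lcs k (rho a x)).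
  exact: subspace_preim (rho_linear a) (lcs_subspace k).
split; first by apply/lcs_closureP => a; exact: subspace0 (sub a).
by move=> c x y /lcs_closureP cx /lcs_closureP cy; apply/lcs_closureP => a; apply: (sub a).2.
Qed.

Lemma rho_lcs_directed k : directed (fun a x => lcs k (rho a x)).
Proof.
move=> a b; have [g ker_g] := rho_ker_directed a b; exists g.
move=> x /(lcs_lift (rho_morph g) (@rho_surj g)) [y ly eq_yx].
have ker_ga w : rho g w = 0 -> rho a w = 0 by move/ker_g => [].
have ker_gb w : rho g w = 0 -> rho b w = 0 by move/ker_g => [].
rewrite -(rho_ker_eq ker_ga eq_yx) -(rho_ker_eq ker_gb eq_yx).
by split; apply: lcs_morph ly; apply: rho_morph.
Qed.

Lemma lcs_sub_closure k x : lcs k x -> clos k x.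
Proof. by move=> lx a; exists x. Qed.

Lemma lcs_closure_le k m x : (k <= m)%N -> clos m x -> clos k x.
Proof. by move=> le_km /lcs_closureP cx; apply/lcs_closureP => a; apply: lcs_le le_km _. Qed.

Lemma lcs_closure_br k x y : clos k y -> clos k.+1 (br x y).
Proof.
move/lcs_closureP => cy; apply/lcs_closureP => a.
by have [_ [_ ->]] := rho_morph a; apply: lcs_br.
Qed.

Lemma lcs_closure_hcomp k p x : clos k x -> clos k (hcomp p x).
Proof.
move/lcs_closureP => cx; apply/lcs_closureP => a.
by rewrite -(morph_hcomp (rho_morph a)); apply: lcs_hcomp.
Qed.

Lemma lcs_closure2_br j l y : clos 2 l -> lcs j y -> clos j.+2 (br l y).
Proof.
move/lcs_closureP => cl ly; apply/lcs_closureP => a.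
have [_ [_ ->]] := rho_morph a; apply: lcs2_br (cl a) _.
exact: (lcs_morph (rho_morph a) ly).
Qed.

Lemma lcs_closure_eq0 x : (forall n, clos n x) -> x = 0.
Proof.
move=> cx; apply: rho_separating => a; have [n nil_a] := La_nilpotent a.
by apply: nil_a; move/lcs_closureP: (cx n); apply.
Qed.

Lemma rho_lift_deg a p (y : La a) : gla_deg p y -> exists2 x, deg p x & rho a x = y.
Proof.
move=> dy; have [x xy] := rho_surj y; exists (hcomp p x); first exact: hcomp_deg.
by rewrite -(morph_hcomp (rho_morph a)) xy (hcomp_id dy).
Qed.

Lemma lcs_closure_telescope (ys : nat -> L) : (forall t, clos t (ys t.+1 - ys t)) ->
  forall t s, (t <= s)%N -> clos t (ys s - ys t).
Proof.
move=> cys t s /subnKC <-; elim: (s - t)%N => [|e IHe].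
  by rewrite addn0 subrr; exact: subspace0 (lcs_closure_subspace t).
rewrite addnS -[ys _](subrK (ys (t + e)%N)) -addrA.
apply: subspaceD (lcs_closure_subspace t) _ _ _ IHe.
by apply: lcs_closure_le (cys _); exact: leq_addr.
Qed.

(* Since each [La a] is nilpotent, [rho a (ys t)] is eventually constant; its limit is
   a compatible family. *)
Lemma lcs_closure_complete d (ys : nat -> L) : (forall t, deg d (ys t)) ->
  (forall t, clos t (ys t.+1 - ys t)) -> exists2 y, deg d y & forall t, clos t (y - ys t).
Proof.
move=> dys cys; have [N nilN] := functional_choice _ La_nilpotent.
have tele := lcs_closure_telescope cys.
have stat a s : (N a <= s)%N -> rho a (ys s) = rho a (ys (N a)).
  move=> le_s; apply/eqP; rewrite -subr_eq0 -(linB (rho_linear a)); apply/eqP/nilN.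
  by move/lcs_closureP: (tele _ _ le_s); apply.
have [||y dy rho_y] := @rho_limit d (fun a => rho a (ys (N a))).
- by move=> a; have [_ [rho_deg _]] := rho_morph a; apply: rho_deg.
- move=> a g ker_ga z /(rho_ker_eq ker_ga) ->.
  rewrite -(stat a (maxn (N a) (N g))) ?leq_maxl //; apply: (rho_ker_eq ker_ga).
  by rewrite stat ?leq_maxr.
exists y => // t; apply/lcs_closureP => a.
rewrite (linB (rho_linear a)) rho_y -(stat a (maxn (N a) t)) ?leq_maxl // -(linB (rho_linear a)).
by move/lcs_closureP: (tele t _ (leq_maxr (N a) t)); apply.
Qed.

Lemma findim_quot_gens :
  (forall p, findim_quot_deg (clos 2) p) ->
  exists gens : nat -> seq L,
    forall r, {in gens r, forall v, deg r v} /\ spans_mod (gens r) (deg r) (clos 2).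
Proof.
move=> quot_fin.
suff gens_r r : exists s : seq L, {in s, forall v, deg r v} /\ spans_mod s (deg r) (clos 2).
  exact: functional_choice _ gens_r.
have [n [v [dv span_v]]] := quot_fin r.
exists [seq v i | i <- index_enum 'I_n]; split; first by move=> _ /mapP [i _ ->].
by move=> x /span_v [c cx]; exists (\sum_(i < n) c i *: v i) => //; exact: lspan_map.
Qed.

Section QuotientGenerators.
Variable gens : nat -> seq L.
Hypothesis gens_deg : forall r, {in gens r, forall v, deg r v}.
Hypothesis gens_span : forall r, spans_mod (gens r) (deg r) (clos 2).

Definition brgen p (Z : nat -> nat -> L) : L :=
  \sum_(r < p.+1) \sum_(i < size (gens r)) br (gens r)`_i (Z r i).

Definition admissible (P : L -> Prop) p (Z : nat -> nat -> L) :=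
  forall r i, deg (p - r) (Z r i) /\ P (Z r i).

Lemma brgen_in (P : L -> Prop) p (Z : nat -> nat -> L) : subspace P ->
  (forall (r : 'I_p.+1) (i : 'I_(size (gens r))), P (br (gens r)`_i (Z r i))) ->
  P (brgen p Z).
Proof. by move=> P_sub PZ; do 2 apply: subspace_sum => // ? _. Qed.

Lemma brgen_linear p (c : rat) (Z Z' : nat -> nat -> L) :
  brgen p (fun r i => c *: Z r i + Z' r i) = c *: brgen p Z + brgen p Z'.
Proof.
rewrite /brgen scaler_sumr -big_split; apply: eq_bigr => r _.
by rewrite scaler_sumr -big_split; apply: eq_bigr => i _; rewrite brDr brZr.
Qed.

Lemma brgen0 p : brgen p (fun _ _ => 0) = 0.
Proof. by rewrite /brgen big1 // => r _; rewrite big1 // => i _; rewrite br0r. Qed.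

Lemma brgenD p (Z Z' : nat -> nat -> L) :
  brgen p (fun r i => Z r i + Z' r i) = brgen p Z + brgen p Z'.
Proof.
rewrite /brgen -big_split; apply: eq_bigr => r _.
by rewrite -big_split; apply: eq_bigr => i _; rewrite brDr.
Qed.

Lemma brgenB p (Z Z' : nat -> nat -> L) :
  brgen p (fun r i => Z r i - Z' r i) = brgen p Z - brgen p Z'.
Proof.
rewrite /brgen -sumrB; apply: eq_bigr => r _.
by rewrite -sumrB; apply: eq_bigr => i _; rewrite brBr.
Qed.

Lemma brgen_deg P p (Z : nat -> nat -> L) : admissible P p Z -> deg p (brgen p Z).
Proof.
move=> admZ; apply: (brgen_in (deg_subspace p)) => r i.
have dv : deg r (gens r)`_i by apply: gens_deg; exact: mem_nth.
by have := gla_br_deg dv (admZ r i).1; rewrite subnKC // -ltnS.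
Qed.

Definition gen_approx m p (y : L) :=
  exists2 Z, admissible (lcs m) p Z & clos m.+2 (y - brgen p Z).

Lemma gen_approx_subspace m p : subspace (gen_approx m p).
Proof.
split.
  exists (fun _ _ => 0).
    by move=> r i; split; [exact: gla_deg0 | exact: (subspace0 (lcs_subspace _))].
  by rewrite brgen0 subr0; exact: (subspace0 (lcs_closure_subspace _)).
move=> c x y [Z admZ cZ] [Z' admZ' cZ']; exists (fun r i => c *: Z r i + Z' r i).
  move=> r i; have [dZ lZ] := admZ r i; have [dZ' lZ'] := admZ' r i.
  by split; [apply: (deg_subspace _).2 | apply: (lcs_subspace _).2].
rewrite brgen_linear opprD addrACA -scalerBr.
by apply: (lcs_closure_subspace _).2.
Qed.

Lemma brgen_single p r (c : nat -> rat) y : (r <= p)%N ->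
  brgen p (fun r' i => if r' == r then c i *: y else 0) =
  br (\sum_(i < size (gens r)) c i *: (gens r)`_i) y.
Proof.
rewrite -ltnS => lt_rp; rewrite /brgen (bigD1 (Ordinal lt_rp)) //= eqxx.
rewrite br_suml [X in _ + X]big1 ?addr0 => [|r' ne_r'r].
  by apply: eq_bigr => i _; rewrite brZl brZr.
have ne_r'r_nat : (r' : nat) != r by rewrite -(inj_eq val_inj) in ne_r'r.
by rewrite big1 // => i _; rewrite (negbTE ne_r'r_nat) br0r.
Qed.

Lemma gen_approx_br m p r s x y : (r + s)%N = p -> deg r x -> deg s y -> lcs m.+1 y ->
  gen_approx m.+1 p (br x y).
Proof.
move=> rsp dx dy ly; have [v [c ->] cxv] := gens_span dx.
exists (fun r' i => if r' == r then c i *: y else 0).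
  move=> r' i; case: eqP => [->|_].
    rewrite -rsp addKn; split; first exact: subspaceZ (deg_subspace s) _ _ dy.
    exact: subspaceZ (lcs_subspace _) _ _ ly.
  by split; [exact: gla_deg0 | exact: (subspace0 (lcs_subspace _))].
by rewrite brgen_single -?rsp ?leq_addr // -brBl; exact: lcs_closure2_br.
Qed.

Lemma gen_approx_hcomp m p w : lcs m.+2 w -> gen_approx m.+1 p (hcomp p w).
Proof.
rewrite lcsSS => -[n [xs [ys [lys ->]]]]; rewrite (lin_sum (hcomp_linear p)).
apply: subspace_sum => [|i _]; first exact: gen_approx_subspace.
apply: hcomp_br_in => [|r s rsp]; first exact: gen_approx_subspace.
by apply: gen_approx_br rsp (hcomp_deg _ _) (hcomp_deg _ _) _; apply: lcs_hcomp.
Qed.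

Lemma gen_approx_at a m p u : deg p u -> clos m.+2 u ->
  exists2 Z, admissible (lcs m.+1) p Z & lcs m.+3 (rho a (u - brgen p Z)).
Proof.
move=> du /lcs_closureP /(_ a) /(lcs_lift (rho_morph a) (@rho_surj a)) [w lw rho_w].
have [Z admZ cZ] := gen_approx_hcomp p lw; exists Z => //.
have rho_u : rho a u = rho a (hcomp p w).
  by rewrite -(morph_hcomp (rho_morph a)) rho_w (morph_hcomp (rho_morph a)) (hcomp_id du).
by rewrite !(linB (rho_linear a)) rho_u -(linB (rho_linear a)); move/lcs_closureP: cZ; apply.
Qed.

(* For each [a] separately, [gen_approx_at] and the induction hypothesis approximate [u] in
   the span of [D]; stabilisation of the kernels makes one approximation work for all [a]. *)
Lemma lcs_closure_layer_gens j q : exists s : seq L,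
  {in s, forall y, deg q y} /\ spans_mod s (fun u => deg q u /\ clos j.+1 u) (clos j.+2).
Proof.
elim: j q => [|j IHj] q; first by exists (gens q); split => // u [du _]; exact: gens_span.
have [S /all_and2 [dS spanS]] := functional_choice _ IHj.
pose D := flatten [seq flatten [seq map (br (gens r)`_i) (S (q - r)%N)
                                | i : 'I_(size (gens r)) <- index_enum 'I_(size (gens r))]
                  | r : 'I_q.+1 <- index_enum 'I_q.+1].
exists D; split.
  move=> _ /flattenP [_ /mapP [r _ ->] /flattenP [_ /mapP [i _ ->] /mapP [y Sy ->]]].
  have dv : deg r (gens r)`_i by apply: gens_deg; exact: mem_nth.
  by have := gla_br_deg dv (dS _ _ Sy); rewrite subnKC // -ltnS.
move=> u [du cu].
suff [y Dy ly] : exists2 y, lspan D y & forall a, lcs j.+3 (rho a (u - y)).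
  by exists y => //; apply/lcs_closureP.
apply: (directed_subspaces_approx (R := fun a x => lcs j.+3 (rho a x))).
- exact: ce_inhabited.
- by move=> a; apply: subspace_preim (rho_linear a) (lcs_subspace _).
- exact: rho_lcs_directed.
move=> a; have [Z admZ lZ] := gen_approx_at a du cu.
have approxZ r i : exists y, lspan (S (q - r)%N) y /\ clos j.+2 (Z r i - y).
  have [dZ lZr] := admZ r i.
  by have [y sy cy] := spanS (q - r)%N _ (conj dZ (lcs_sub_closure lZr)); exists y.
have [Y YP] := functional_choice _ (fun r => functional_choice _ (approxZ r)).
exists (brgen q Y).
  do 2 apply: lspan_flatten => ?; apply: lspan_linear (YP _ _).1; exact: br_linearr.
have -> : u - brgen q Y = (u - brgen q Z) + brgen q (fun r i => Z r i - Y r i).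
  by rewrite brgenB addrA subrK.
rewrite (linD (rho_linear a)); apply: subspaceD (lcs_subspace _) _ _ lZ _.
move: a; apply/lcs_closureP; apply: brgen_in (lcs_closure_subspace _) _ => r i.
exact: (lcs_closure_br _ (YP r i).2).
Qed.

Lemma lcs_closure_quot_gens k q : exists s : seq L,
  {in s, forall y, deg q y} /\ spans_mod s (deg q) (clos k).
Proof.
have trivial_span k' : (k' <= 1)%N -> spans_mod [::] (deg q) (clos k').
  move=> le_k'1 u _; exists 0; first exact: lspan0.
  by apply: lcs_sub_closure; case: k' le_k'1 => [|[]].
elim: k => [|[|k] [s [ds span_s]]]; try by exists [::]; split => //; exact: trivial_span.
have [s' [ds' span_s']] := lcs_closure_layer_gens k q.
exists (s ++ s'); split; first by move=> y; rewrite mem_cat => /orP [/ds|/ds'].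
exact: spans_mod_cat (deg_subspace q) ds span_s span_s'.
Qed.

Lemma rho_reflects_lcs p k : exists a, forall x, deg p x -> lcs k (rho a x) -> clos k x.
Proof.
have [s [ds span_s]] := lcs_closure_quot_gens k p.
have [g stable] := directed_subspaces_stable (R := fun a x => lcs k (rho a x))
  ce_inhabited (fun a => subspace_preim (rho_linear a) (lcs_subspace _)) (rho_lcs_directed k) s.
exists g => x dx lx; have [y sy cxy] := span_s x dx.
have ly : lcs k (rho g y).
  rewrite -[y](subKr x) (linB (rho_linear g)); apply: subspaceB (lcs_subspace _) _ _ lx _.
  by move/lcs_closureP: cxy; apply.
apply/lcs_closureP => b; rewrite -(subrK y x) (linD (rho_linear b)).
by apply: subspaceD (lcs_subspace _) _ _ _ (stable b y sy ly); move/lcs_closureP: cxy; apply.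
Qed.

Lemma lcs_closure_gen_approx m p u : deg p u -> clos m.+2 u ->
  exists2 Z, admissible (lcs m.+1) p Z & clos m.+3 (u - brgen p Z).
Proof.
move=> du cu; have [a refl_a] := rho_reflects_lcs p m.+3.
have [Z admZ lZ] := gen_approx_at a du cu; exists Z => //; apply: refl_a lZ.
exact: subspaceB (deg_subspace p) _ _ du (brgen_deg admZ).
Qed.

Lemma gen_approx_series k p x : deg p x -> clos k.+2 x ->
  exists Zs : nat -> nat -> nat -> L, forall t,
    (admissible (clos k.+1) p (Zs t) /\ clos (k + t).+2 (x - brgen p (Zs t))) /\
    forall r i, clos (k + t).+1 (Zs t.+1 r i - Zs t r i).
Proof.
move=> dx cx.
apply: (dependent_choice_nat (x0 := fun _ _ => 0)
  (P := fun t Z => admissible (clos k.+1) p Z /\ clos (k + t).+2 (x - brgen p Z))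
  (R := fun t Z Z' => forall r i, clos (k + t).+1 (Z' r i - Z r i))).
  split; last by rewrite brgen0 subr0 addn0.
  by move=> r i; split; [exact: gla_deg0 | exact: (subspace0 (lcs_closure_subspace _))].
move=> t Z [admZ cZ].
have du : deg p (x - brgen p Z) by apply: subspaceB (deg_subspace p) _ _ dx (brgen_deg admZ).
have [Z0 admZ0 cZ0] := lcs_closure_gen_approx du cZ.
exists (fun r i => Z r i + Z0 r i); split; [split|].
- move=> r i; have [dZ cZr] := admZ r i; have [dZ0 lZ0] := admZ0 r i; split.
    exact: subspaceD (deg_subspace _) _ _ dZ dZ0.
  apply: subspaceD (lcs_closure_subspace _) _ _ cZr _.
  by apply: lcs_closure_le (lcs_sub_closure lZ0); rewrite ltnS leq_addr.
- by rewrite brgenD opprD addrA addnS.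
- by move=> r i; rewrite addrC addKr; apply: lcs_sub_closure; exact: (admZ0 r i).2.
Qed.

(* The corrections converge by completeness; [x - brgen p Zl] then lies in every [L^(n)]. *)
Lemma gen_approx_limit k p x : deg p x -> clos k.+2 x ->
  exists2 Z, admissible (clos k.+1) p Z & x = brgen p Z.
Proof.
move=> dx cx; have [Zs Zs_spec] := gen_approx_series dx cx.
have lim r i : exists z, deg (p - r) z /\ forall t, clos t (z - Zs t r i).
  have [||z dz cz] := @lcs_closure_complete (p - r) (fun t => Zs t r i).
  - by move=> t; exact: ((Zs_spec t).1.1 r i).1.
  - by move=> t; apply: lcs_closure_le (leqW (leq_addl k t)) ((Zs_spec t).2 r i).
  by exists z.
have [Zl Zl_spec] := functional_choice _ (fun r => functional_choice _ (lim r)).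
exists Zl.
  move=> r i; split; first exact: (Zl_spec r i).1.
  rewrite -(subrK (Zs k.+1 r i) (Zl r i)); apply: subspaceD (lcs_closure_subspace _) _ _ _ _.
    exact: (Zl_spec r i).2.
  exact: ((Zs_spec k.+1).1.1 r i).2.
apply/eqP; rewrite -subr_eq0; apply/eqP/lcs_closure_eq0 => n.
have -> : x - brgen p Zl = (x - brgen p (Zs n)) - brgen p (fun r i => Zl r i - Zs n r i).
  by rewrite brgenB opprB addrA subrK.
apply: subspaceB (lcs_closure_subspace _) _ _ _ _.
  exact: lcs_closure_le (leqW (leqW (leq_addl k n))) (Zs_spec n).1.2.
apply: lcs_closure_le (leqnSn n) _; apply: brgen_in (lcs_closure_subspace _) _ => r i.
exact: (lcs_closure_br _ ((Zl_spec r i).2 n)).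
Qed.

Lemma lcs_closure_lcs_deg k p x : (forall z, clos k.+1 z -> lcs k.+1 z) ->
  deg p x -> clos k.+2 x -> lcs k.+2 x.
Proof.
move=> lcs_k dx cx; have [Z admZ ->] := gen_approx_limit dx cx.
apply: brgen_in (lcs_subspace _) _ => r i.
by apply: lcs_br; apply: lcs_k; exact: (admZ r i).2.
Qed.

Lemma lcs_closure_lcs k x : (1 <= k)%N -> clos k x -> lcs k x.
Proof.
case: k => [//|k] _; elim: k x => [|k IHk] x cx //.
rewrite (hcomp_sum (leqnn (hbound x))); apply: (subspace_sum (lcs_subspace _)) => r _.
exact: lcs_closure_lcs_deg IHk (hcomp_deg _ _) (lcs_closure_hcomp _ cx).
Qed.

End QuotientGenerators.

End CompleteEnriched.

Theorem proposition3p1 (L : GLie) (A : Type) (La : A -> GLie)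
    (rho : forall a, L -> La a) :
  @complete_enriched L A La rho ->
  (forall p, findim_quot_deg (@lcs_closure L A La rho 2) p) ->
  (* (i) (L/L^(k))_p -> (L_a/L_a^k)_p is an isomorphism for some a *)
  (forall (p k : nat), exists a,
      (forall x, gla_deg p x -> lcs k (rho a x) -> @lcs_closure L A La rho k x) /\
      (forall y : La a, gla_deg p y ->
         exists x, gla_deg p x /\ lcs k (rho a x - y))) /\
  (* (ii) *)
  (forall k, (1 <= k)%N -> forall x : L, lcs k x <-> @lcs_closure L A La rho k x) /\
  pronilpotent L.
Proof.
move=> L_ce /findim_quot_gens [gens /all_and2 [gens_deg gens_span]].
have lcs_closureE k : (1 <= k)%N -> forall x, lcs k x <-> lcs_closure rho k x.
  by move=> k_gt0 x; split; [exact: lcs_sub_closure | exact: lcs_closure_lcs].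
split; [|split; first exact: lcs_closureE].
  move=> p k; have [a reflect_a] := rho_reflects_lcs L_ce gens_deg gens_span p k.
  exists a; split => // y dy; have [x dx <-] := rho_lift_deg L_ce dy.
  by exists x; rewrite subrr; split => //; exact: (subspace0 (lcs_subspace _)).
split=> [x lx | p xs dxs cxs].
  by apply: (lcs_closure_eq0 L_ce) => n; apply: lcs_sub_closure.
have [x dx cx] := lcs_closure_complete L_ce dxs (fun t => lcs_sub_closure rho (cxs t)).
by exists x; split => // -[|n] //; apply/(lcs_closureE _ (ltn0Sn n)).
Qed.
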